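(* Let $p$ be a prime and $G$ a reduced abelian $p$-group. Then every subgroup of $G$ is an essential subgroup of some direct summand of $G$ if, and only if, there exist a positive integer $n$ and index sets $I, J$ such that $$G \cong \Big(\bigoplus_{I} \mathbb{Z}_{p^n}\Big) \oplus \Big(\bigoplus_{J} \mathbb{Z}_{p^{n+1}}\Big),$$ i.e., the Ulm invariants satisfy $f_G(\alpha) = 0$ unless $\alpha \in \{n-1, n\}$. In particular, every such group $G$ is semi-generalized Bassian.
   Context: All groups are additively written abelian groups; $\mathbb{Z}_{p^k}$ denotes the cyclic group of order $p^k$. $f_G(\alpha)$ denotes the $\alpha$-th Ulm–Kaplansky invariant of $G$ (for finite $\alpha$, the number of cyclic summands of order $p^{\alpha+1}$ in a bounded $G$). A subgroup $H$ of a group $A$ is essential in $A$ if $H \cap S \neq \{0\}$ for every non-zero subgroup $S$ of $A$. A group $G$ is semi-generalized Bassian if, for every subgroup $H \le G$, the existence of an injective homomorphism $G \to G/H$ implies that $H$ is an essential subgroup of some direct summand of $G$. *)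

From mathcomp Require Import all_boot all_order all_algebra.
Set Implicit Arguments. Unset Strict Implicit. Unset Printing Implicit Defensive.
Import GRing.Theory.
Local Open Scope ring_scope.

Definition is_subgroup (G : zmodType) (S : G -> Prop) : Prop :=
  S 0 /\ (forall x y, S x -> S y -> S (x - y)).

Definition is_p_group (p : nat) (G : zmodType) : Prop :=
  forall x : G, exists k : nat, x *+ (p ^ k)%N = 0.

Definition divisible_sub (G : zmodType) (S : G -> Prop) : Prop :=
  forall x, S x -> forall m : nat, (0 < m)%N -> exists y, S y /\ y *+ m = x.

Definition reduced (G : zmodType) : Prop :=
  forall S : G -> Prop, is_subgroup S -> divisible_sub S -> forall x, S x -> x = 0.

Definition direct_summand (G : zmodType) (A : G -> Prop) : Prop :=
  is_subgroup A /\
  exists B : G -> Prop, is_subgroup B /\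
    (forall x, A x -> B x -> x = 0) /\
    (forall g, exists a b, A a /\ B b /\ g = a + b).

Definition essential_in (G : zmodType) (H A : G -> Prop) : Prop :=
  is_subgroup H /\ is_subgroup A /\ (forall x, H x -> A x) /\
  forall S : G -> Prop, is_subgroup S -> (forall x, S x -> A x) ->
    (exists s, S s /\ s <> 0) -> exists x, S x /\ H x /\ x <> 0.

Definition every_sub_essential_in_summand (G : zmodType) : Prop :=
  forall H : G -> Prop, is_subgroup H ->
    exists A : G -> Prop, direct_summand A /\ essential_in H A.

Definition additive_map (G Q : zmodType) (f : G -> Q) : Prop :=
  forall x y, f (x + y) = f x + f y.

(* G embeds into G/H. The quotient G/H is represented by any group Q with a
   surjective homomorphism pi : G -> Q whose kernel is exactly H. *)
Definition embeds_in_quotient (G : zmodType) (H : G -> Prop) : Prop :=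
  exists (Q : zmodType) (pi : G -> Q) (phi : G -> Q),
    additive_map pi /\ (forall q, exists g, pi g = q) /\
    (forall g, pi g = 0 <-> H g) /\
    additive_map phi /\ injective phi.

Definition semi_generalized_Bassian (G : zmodType) : Prop :=
  forall H : G -> Prop, is_subgroup H -> embeds_in_quotient H ->
    exists A : G -> Prop, direct_summand A /\ essential_in H A.

Definition has_order (G : zmodType) (x : G) (m : nat) : Prop :=
  x *+ m = 0 /\ forall k : nat, (0 < k < m)%N -> x *+ k <> 0.

(* G is the (internal) direct sum of the cyclic subgroups <x k>, k : K:
   every element is a finite Z-combination of the x k (nat coefficients suffice
   since the x k have finite order), and the family is independent. *)
Definition direct_sum_of_cyclics (G : zmodType) (K : Type) (x : K -> G) : Prop :=
  (forall g : G, exists (m : nat) (f : 'I_m -> K) (c : 'I_m -> nat),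
      g = \sum_(i < m) x (f i) *+ c i) /\
  (forall (m : nat) (f : 'I_m -> K) (c : 'I_m -> nat), injective f ->
      \sum_(i < m) x (f i) *+ c i = 0 -> forall i, x (f i) *+ c i = 0).

(* G ≅ (⊕_I Z_{p^n}) ⊕ (⊕_J Z_{p^(n+1)}): G is the internal direct sum of
   cyclic subgroups generated by a family (a i)_{i:I} of elements of order p^n
   and a family (b j)_{j:J} of elements of order p^(n+1). *)
Definition sum_of_cyclics_n_n1 (p n : nat) (G : zmodType) : Prop :=
  exists (I J : Type) (a : I -> G) (b : J -> G),
    (forall i, has_order (a i) (p ^ n)%N) /\
    (forall j, has_order (b j) (p ^ n.+1)%N) /\
    direct_sum_of_cyclics (fun k : I + J => match k with inl i => a i | inr j => b j end).

From mathcomp Require Import all_boot all_order all_algebra cyclic.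
From mathcomp Require Import boolp classical_sets.

(* With [k = n - 1], the decomposition is equivalent to [p ^ k.+2 G = 0] together with
   [G[p] <= p ^ k G]: a basis of the socle [G[p]] extending one of [G[p] :&: p ^ k.+1 G]
   lifts to cyclic summands of orders [p ^ k.+1] and [p ^ k.+2].
   Under these two conditions a subgroup [H] is essential in a summand: split [G[p]] as
   [H[p] (+) W] compatibly with [p ^ k.+1 G], and take [A >= H] and [B] maximal with
   socles in [H[p]] and [W]. Maximality makes them pure up to height [k.+1], which gives
   [G = A (+) B], and [A[p] <= H] makes [H] essential in [A].
   Conversely, let [k] be least such that [G[p]] is not contained in [p ^ k.+1 G]. An
   element [z] with [z *+ p ^ k.+2 <> 0] is then ruled out by a summand in which the cyclic
   subgroup generated by [y + z *+ p] is essential, [y *+ p ^ k] being a socle element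
   outside [p ^ k.+1 G]. If there is no such [k], [G] is divisible, hence trivial. *)

Set Implicit Arguments. Unset Strict Implicit. Unset Printing Implicit Defensive.
Import GRing.Theory.
Local Open Scope ring_scope.

Section Zorn.
Variable T : Type.

Definition chain (F : (T -> Prop) -> Prop) :=
  forall X Y, F X -> F Y -> (forall t, X t -> Y t) \/ (forall t, Y t -> X t).

Definition chain_closed (P : (T -> Prop) -> Prop) :=
  forall F : (T -> Prop) -> Prop, (exists X, F X) -> (forall X, F X -> P X) -> chain F ->
    P (fun t => exists2 X, F X & X t).

Lemma zorn_above (P : (T -> Prop) -> Prop) (X0 : T -> Prop) :
  chain_closed P -> P X0 ->
  exists M, [/\ P M, forall t, X0 t -> M t &
    forall M', P M' -> (forall t, M t -> M' t) -> forall t, M' t -> M t].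
Proof.
move=> closedP PX0.
pose S := {X : T -> Prop | P X /\ forall t, X0 t -> X t}.
pose R (A B : S) := `[< forall t, sval A t -> sval B t >].
pose S0 : S := exist _ X0 (conj PX0 (fun _ h => h)).
have [||F Ftot|[M [PM X0M]] Mmax] := @ZL_preorder S S0 R.
- by move=> A; apply/asboolP.
- by move=> A B C /asboolP AB /asboolP BC; apply/asboolP => t /AB /BC.
- have [[A FA]|noF] := pselect (exists A, F A); last first.
    by exists S0 => A FA; case: noF; exists A.
  pose U := fun t => exists2 X, (exists2 B : S, F B & sval B = X) & X t.
  have PU : P U.
    apply: closedP; first by exists (sval A); exists A.
      by move=> _ [B _ <-]; case: (svalP B).
    move=> _ _ [B FB <-] [C FC <-].
    by case: (Ftot B C FB FC) => /asboolP; [left|right].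
  have X0U : forall t, X0 t -> U t.
    by move=> t X0t; exists (sval A); [exists A|case: (svalP A) => _; apply].
  exists (exist _ U (conj PU X0U)) => B FB; apply/asboolP => t Bt.
  by exists (sval B) => //; exists B.
- exists M; split => // M' PM' MM'.
  have /(_ (asboolT MM')) /asboolP // := Mmax (exist _ M' (conj PM' (fun t h => MM' t (X0M t h)))).
Qed.

Lemma chain_closedI (P Q : (T -> Prop) -> Prop) :
  chain_closed P -> chain_closed Q -> chain_closed (fun X => P X /\ Q X).
Proof.
move=> cP cQ F Fne FPQ Fchain; split.
  by apply: cP => // X /FPQ[].
by apply: cQ => // X /FPQ[].
Qed.

Lemma subset_chain_closed (Y : T -> Prop) :
  chain_closed (fun X => forall t, X t -> Y t).
Proof. by move=> F _ FY _ t [X /FY]; apply. Qed.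

Lemma superset_chain_closed (Y : T -> Prop) :
  chain_closed (fun X => forall t, Y t -> X t).
Proof. by move=> F [X FX] FY _ t Yt; exists X => //; apply: FY. Qed.

Lemma chain_bound_ord (F : (T -> Prop) -> Prop) m (f : 'I_m -> T) :
  (exists X, F X) -> chain F -> (forall i, exists2 X, F X & X (f i)) ->
  exists2 X, F X & forall i, X (f i).
Proof.
move=> [X0 FX0] Fchain; elim: m f => [|m IHm] f f_in; first by exists X0 => // -[].
have [X FX Xf] := IHm (fun j => f (lift ord_max j)) (fun j => f_in _).
have [Y FY Yf] := f_in ord_max.
have [XY|YX] := Fchain X Y FX FY.
  by exists Y => // i; case: (unliftP ord_max i) => [j ->|->] //; apply: XY.
by exists X => // i; case: (unliftP ord_max i) => [j ->|->] //; apply: YX.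
Qed.

End Zorn.

Arguments subset_chain_closed {T} Y.
Arguments superset_chain_closed {T} Y.

Section Subgroups.
Variable G : zmodType.
Implicit Types (S X Y : G -> Prop) (x y g : G).

Lemma subg0 S : is_subgroup S -> S 0. Proof. by case. Qed.

Lemma subgB S x y : is_subgroup S -> S x -> S y -> S (x - y).
Proof. by case=> _; apply. Qed.

Lemma subgN S x : is_subgroup S -> S x -> S (- x).
Proof. by move=> sS Sx; rewrite -sub0r; apply: subgB => //; apply: subg0. Qed.

Lemma subgD S x y : is_subgroup S -> S x -> S y -> S (x + y).
Proof. by move=> sS Sx Sy; rewrite -[y]opprK; apply: subgB => //; apply: subgN. Qed.

Lemma subgMn S x k : is_subgroup S -> S x -> S (x *+ k).
Proof.
move=> sS Sx; elim: k => [|k IHk]; first by rewrite mulr0n; apply: subg0.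
by rewrite mulrS; apply: subgD.
Qed.

Lemma subg_sum S m (F : 'I_m -> G) :
  is_subgroup S -> (forall i, S (F i)) -> S (\sum_(i < m) F i).
Proof.
by move=> sS SF; apply: big_ind => [|u v|i _]; [apply: subg0 | apply: subgD | apply: SF].
Qed.

Lemma subgroup0 : is_subgroup (fun g : G => g = 0).
Proof. by split => // x y -> ->; rewrite subr0. Qed.

Lemma subgroupI X Y : is_subgroup X -> is_subgroup Y -> is_subgroup (fun g => X g /\ Y g).
Proof.
move=> sX sY; split; first by split; apply: subg0.
by move=> x y [Xx Yx] [Xy Yy]; split; apply: subgB.
Qed.

Lemma subgroup_chain_closed : chain_closed (@is_subgroup G).
Proof.
move=> F [X0 FX0] Fsub Fchain; split; first by exists X0 => //; exact: subg0 (Fsub _ FX0).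
move=> x y [X FX Xx] [Y FY Yy].
have [XY|YX] := Fchain X Y FX FY.
  by exists Y => //; apply: subgB (Fsub _ FY) (XY _ Xx) Yy.
by exists X => //; apply: subgB (Fsub _ FX) Xx (YX _ Yy).
Qed.

Definition sumg X Y : G -> Prop := fun g => exists x y, [/\ X x, Y y & g = x + y].

Definition multiples x : G -> Prop := fun g => exists c, g = x *+ c.

Lemma sumg_subgroup X Y : is_subgroup X -> is_subgroup Y -> is_subgroup (sumg X Y).
Proof.
move=> sX sY; split; first by exists 0, 0; rewrite addr0; split => //; apply: subg0.
move=> _ _ [x1 [y1 [X1 Y1 ->]]] [x2 [y2 [X2 Y2 ->]]].
by exists (x1 - x2), (y1 - y2); rewrite opprD addrACA; split => //; apply: subgB.
Qed.

Lemma sumgl X Y x : is_subgroup Y -> X x -> sumg X Y x.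
Proof. by move=> sY Xx; exists x, 0; rewrite addr0; split => //; apply: subg0. Qed.

Lemma sumgr X Y y : is_subgroup X -> Y y -> sumg X Y y.
Proof. by move=> sX Yy; exists 0, y; rewrite add0r; split => //; apply: subg0. Qed.

Lemma oppr_mulrn x k c : (0 < k)%N -> x *+ k = 0 -> - (x *+ c) = x *+ (c * k.-1).
Proof.
move=> k_gt0 xk; apply/eqP.
by rewrite eq_sym -addr_eq0 -mulrnDr -mulnSr prednK // mulnC mulrnA xk mul0rn.
Qed.

Lemma multiples_subgroup x k : (0 < k)%N -> x *+ k = 0 -> is_subgroup (multiples x).
Proof.
move=> k_gt0 xk; split; first by exists 0%N.
by move=> _ _ [c1 ->] [c2 ->]; exists (c1 + c2 * k.-1)%N; rewrite mulrnDr (oppr_mulrn _ k_gt0).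
Qed.

Lemma multiples_id x : multiples x x.
Proof. by exists 1%N. Qed.

Lemma multiples_sub S x : is_subgroup S -> S x -> forall g, multiples x g -> S g.
Proof. by move=> sS Sx _ [c ->]; apply: subgMn. Qed.

Lemma mulrn_dvdn_eq0 x m k : x *+ m = 0 -> (m %| k)%N -> x *+ k = 0.
Proof. by move=> xm /dvdnP[q ->]; rewrite mulnC mulrnA xm mul0rn. Qed.

Lemma mulrn_modn x m k : x *+ m = 0 -> x *+ k = x *+ (k %% m).
Proof. by move=> xm; rewrite {1}(divn_eq k m) mulrnDr mulnC mulrnA xm mul0rn add0r. Qed.

Lemma has_order_dvdn x N k : (0 < N)%N -> has_order x N -> x *+ k = 0 -> (N %| k)%N.
Proof.
move=> N_gt0 [xN xlt] xk; apply: contrapT => /negP N_k.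
apply: (xlt (k %% N)%N); last by rewrite -(mulrn_modn _ xN).
by rewrite lt0n N_k ltn_mod.
Qed.

End Subgroups.

Arguments subgroup_chain_closed {G}.

Definition socle (p : nat) {G : zmodType} : G -> Prop := fun g => g *+ p = 0.

Definition pmul (p k : nat) {G : zmodType} : G -> Prop := fun g => exists t, g = t *+ p ^ k.

(* With [G[p] := socle p] and [p ^ k G := pmul p k], this says that the Ulm invariants
   of [G] vanish outside [{k, k.+1}]. *)
Definition ulm_supported (p k : nat) (G : zmodType) :=
  (forall g : G, g *+ p ^ k.+2 = 0) /\ (forall s : G, socle p s -> pmul p k s).

Section PGroups.
Variables (p : nat) (G : zmodType).
Hypothesis p_pr : prime p.
Implicit Types (x y g s : G).

Lemma socle_subgroup : is_subgroup (@socle p G).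
Proof. by split => [|x y]; rewrite /socle ?mul0rn // mulrnBl => -> ->; rewrite subr0. Qed.

Lemma pmul_subgroup k : is_subgroup (@pmul p k G).
Proof.
split; first by exists 0; rewrite mul0rn.
by move=> _ _ [x ->] [y ->]; exists (x - y); rewrite mulrnBl.
Qed.

Lemma pmulW k l x : (k <= l)%N -> pmul p l x -> pmul p k x.
Proof. by move=> kl [t ->]; exists (t *+ p ^ (l - k)); rewrite -mulrnA -expnD subnK. Qed.

Lemma pexp_gt0 k : (0 < p ^ k)%N.
Proof. by rewrite expn_gt0 prime_gt0. Qed.

Lemma coprime_mulrn_inv c N : ~~ (p %| c)%N ->
  exists d, forall x, x *+ p ^ N = 0 -> x *+ (c * d) = x.
Proof.
move=> p_c; have c_coprime : coprime c (p ^ N).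
  by apply: coprimeXr; rewrite coprime_sym prime_coprime.
have phi_gt0 : (0 < totient (p ^ N))%N by rewrite totient_gt0 pexp_gt0.
exists (c ^ (totient (p ^ N)).-1)%N => x xN.
by rewrite -expnS prednK // (mulrn_modn _ xN) Euler_exp_totient // -(mulrn_modn _ xN).
Qed.

Lemma mulrn_gcdn_eq0 x a b : (0 < a)%N -> x *+ a = 0 -> x *+ b = 0 -> x *+ gcdn a b = 0.
Proof.
move=> a_gt0 xa xb; case: (egcdnP b a_gt0) => km kn def_g _.
have : x *+ (km * a) = 0 by rewrite mulnC mulrnA xa mul0rn.
by rewrite def_g mulrnDr mulnC mulrnA xb mul0rn add0r.
Qed.

Lemma has_order_pexp N x : x *+ p ^ N.+1 = 0 -> x *+ p ^ N <> 0 -> has_order x (p ^ N.+1).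
Proof.
move=> xN1 xN; split => // k /andP[k_gt0 k_lt] xk.
have /(dvdn_pfactor _ _ p_pr)[i i_le def_g] := dvdn_gcdl (p ^ N.+1) k.
have i_leN : (i <= N)%N.
  rewrite -ltnS ltn_neqAle i_le andbT; apply/eqP => def_i.
  by move: (dvdn_leq k_gt0 (dvdn_gcdr (p ^ N.+1) k)); rewrite def_g def_i leqNgt k_lt.
apply: xN; apply: mulrn_dvdn_eq0 (mulrn_gcdn_eq0 (pexp_gt0 _) xN1 xk) _.
by rewrite def_g dvdn_exp2l.
Qed.

Lemma socle_multiple_pexp h y c : has_order y (p ^ h.+1) -> socle p (y *+ c) ->
  exists q, y *+ c = y *+ p ^ h *+ q.
Proof.
move=> y_order yc_socle; have : y *+ (c * p) = 0 by rewrite mulrnA.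
move/(has_order_dvdn (pexp_gt0 _) y_order).
rewrite expnSr dvdn_pmul2r ?prime_gt0 // => /dvdnP[q ->].
by exists q; rewrite mulnC mulrnA.
Qed.

Lemma exists_socle_multiple N x : x *+ p ^ N = 0 -> x <> 0 ->
  exists j, x *+ p ^ j <> 0 /\ socle p (x *+ p ^ j).
Proof.
elim: N => [|N IHN] xN x_neq0; first by rewrite expn0 mulr1n in xN.
have [xN'|xN'] := pselect (x *+ p ^ N = 0); first exact: IHN.
by exists N; split => //; rewrite /socle -mulrnA -expnSr.
Qed.

End PGroups.

Definition fcat (A : Type) m1 m2 (f1 : 'I_m1 -> A) (f2 : 'I_m2 -> A) (i : 'I_(m1 + m2)) : A :=
  match split i with inl j => f1 j | inr j => f2 j end.

Lemma fcat_inj (A : Type) m1 m2 (f1 : 'I_m1 -> A) (f2 : 'I_m2 -> A) :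
  injective f1 -> injective f2 -> (forall i j, f1 i <> f2 j) -> injective (fcat f1 f2).
Proof.
move=> inj1 inj2 f12 i j; rewrite /fcat.
case: splitP => [i1|i2] ei; case: splitP => [j1|j2] ej eq_f; apply: val_inj => /=.
- by rewrite ei ej (inj1 _ _ eq_f).
- by case: (f12 _ _ eq_f).
- by case: (f12 _ _ (esym eq_f)).
- by rewrite ei ej (inj2 _ _ eq_f).
Qed.

Section Combinations.
Variables (G : zmodType) (K : Type) (x : K -> G).

Definition combination (g : G) := exists m (f : 'I_m -> K) (c : 'I_m -> nat),
  g = \sum_(i < m) x (f i) *+ c i.

Lemma sum_fcat m1 m2 (f1 : 'I_m1 -> K) (f2 : 'I_m2 -> K) c1 c2 :
  \sum_(i < m1 + m2) x (fcat f1 f2 i) *+ fcat c1 c2 i =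
  \sum_(i < m1) x (f1 i) *+ c1 i + \sum_(i < m2) x (f2 i) *+ c2 i.
Proof.
rewrite big_split_ord /fcat; congr (_ + _); apply: eq_bigr => i _.
  by have /= -> := unsplitK (inl _ i : 'I_m1 + 'I_m2).
by have /= -> := unsplitK (inr _ i : 'I_m1 + 'I_m2).
Qed.

Lemma combination0 : combination 0.
Proof.
have f0 : 'I_0 -> K by case.
by exists 0%N, f0, (fun _ => 0%N); rewrite big_ord0.
Qed.

Lemma combinationD a b : combination a -> combination b -> combination (a + b).
Proof.
move=> [m1 [f1 [c1 ->]]] [m2 [f2 [c2 ->]]].
by exists (m1 + m2)%N, (fcat f1 f2), (fcat c1 c2); rewrite sum_fcat.
Qed.

Lemma combination_subgroup k : (0 < k)%N -> (forall i, x i *+ k = 0) ->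
  is_subgroup combination.
Proof.
move=> k_gt0 xk; split=> [|a b]; first exact: combination0.
move=> a_comb [m [f [c ->]]]; apply: combinationD a_comb _.
exists m, f, (fun i => c i * k.-1)%N; rewrite -sumrN.
by apply: eq_bigr => i _; apply: oppr_mulrn.
Qed.

Lemma combination_injective m (f : 'I_m -> K) (c : 'I_m -> nat) :
  exists m' (f' : 'I_m' -> K) (c' : 'I_m' -> nat), injective f' /\
    \sum_(i < m) x (f i) *+ c i = \sum_(i < m') x (f' i) *+ c' i.
Proof.
elim: m f c => [|m IHm] f c; first by exists 0%N, f, c; split => // -[].
rewrite big_ord_recr /=.
have [m' [f' [c' [f'_inj ->]]]] := IHm (fun i => f (widen_ord (leqnSn m) i))
  (fun i => c (widen_ord (leqnSn m) i)).
have [[j f'j]|f'_new] := pselect (exists j, f' j = f ord_max).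
  exists m', f', (fun i => c' i + (i == j) * c ord_max)%N; split => //.
  under [RHS]eq_bigr do rewrite mulrnDr.
  rewrite big_split /=; congr (_ + _).
  rewrite (bigD1 j) //= eqxx mul1n big1 ?addr0 -?f'j // => i /negbTE ->.
  by rewrite mul0n mulr0n.
exists (m' + 1)%N, (fcat f' (fun _ => f ord_max)), (fcat c' (fun _ => c ord_max)).
split; last by rewrite sum_fcat big_ord1.
apply: fcat_inj => // [i j _|i j]; first by rewrite !ord1.
by move=> f'i; apply: f'_new; exists i.
Qed.

End Combinations.

Lemma combination_sub (G : zmodType) (K K' : Type) (x : K -> G) (y : K' -> G) g :
  combination x g -> (forall i, exists j, x i = y j) -> combination y g.
Proof.
move=> [m [f [c ->]]] xy; have [h xyh] := choice (fun i => xy (f i)).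
by exists m, h, c; apply: eq_bigr => i _; rewrite xyh.
Qed.

Section SocleBases.
Variables (p : nat) (G : zmodType).
Hypothesis p_pr : prime p.
Implicit Types (T Y : G -> Prop) (y : G).

Definition p_independent T := forall m (f : 'I_m -> G) (c : 'I_m -> nat),
  injective f -> (forall i, T (f i)) -> \sum_(i < m) f i *+ c i = 0 -> forall i, (p %| c i)%N.

Definition span T := combination (fun t : {g : G | T g} => sval t).

Lemma span_mem T y : T y -> span T y.
Proof.
by move=> Ty; exists 1%N, (fun _ => exist _ y Ty), (fun _ => 1%N); rewrite big_ord1.
Qed.

Lemma span_subgroup T : (forall t, T t -> socle p t) -> is_subgroup (span T).
Proof. by move=> Tsoc; apply: (combination_subgroup (prime_gt0 p_pr)) => -[t Tt]; apply: Tsoc. Qed.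

Lemma p_independent0 : p_independent (fun _ => False).
Proof. by move=> m f c _ fF _ i; case: (fF i). Qed.

Lemma p_independent_neq0 T t : p_independent T -> T t -> t <> 0.
Proof.
move=> Tind Tt t0; have := Tind 1%N (fun _ => t) (fun _ => 1%N)
  (fun i j _ => etrans (ord1 i) (esym (ord1 j))) (fun _ => Tt).
rewrite big_ord1 t0 mul0rn => /(_ erefl ord0); rewrite dvdn1 => /eqP p1.
by move: p_pr; rewrite p1.
Qed.

Lemma p_independent_chain_closed : chain_closed p_independent.
Proof.
move=> F Fne Find Fchain m f c f_inj fF.
have [X FX Xf] := chain_bound_ord Fne Fchain fF.
exact: Find X FX m f c f_inj Xf.
Qed.

Lemma p_independent_add T y : (forall t, T t -> socle p t) -> socle p y ->
  p_independent T -> ~ span T y -> p_independent (fun g => T g \/ g = y).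
Proof.
move=> Tsoc ysoc Tind y_span m f c f_inj fT sum0.
have [[i0 def_y]|y_new] := pselect (exists i0, f i0 = y); last first.
  by apply: Tind f_inj _ sum0 => i; case: (fT i) => // fi; case: y_new; exists i.
rewrite (bigD1_ord i0) //= def_y in sum0.
have fT' j : T (f (lift i0 j)).
  case: (fT (lift i0 j)) => //; rewrite -def_y => /f_inj/eqP.
  by rewrite eq_sym (negbTE (neq_lift _ _)).
set rest := \sum_(j < m.-1) _ in sum0.
have rest_span : span T rest.
  by exists m.-1, (fun j => exist _ (f (lift i0 j)) (fT' j)), (fun j => c (lift i0 j)).
have p_c : (p %| c i0)%N.
  (* otherwise [y] is a multiple of [y *+ c i0 = - rest] *)
  apply: contrapT => /negP p_c; apply: y_span.
  have [d def_d] := coprime_mulrn_inv G p_pr 1 p_c.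
  rewrite -(def_d y) ?expn1 // mulrnA (_ : y *+ c i0 = - rest).
    exact: subgMn d (span_subgroup Tsoc) (subgN (span_subgroup Tsoc) rest_span).
  by apply/eqP; rewrite -addr_eq0 sum0.
rewrite (mulrn_dvdn_eq0 ysoc p_c) add0r in sum0.
move=> i; case: (unliftP i0 i) => [j ->|->] //.
apply: (Tind m.-1 (fun j => f (lift i0 j)) (fun j => c (lift i0 j))) => //.
by move=> j1 j2 /f_inj/lift_inj.
Qed.

Lemma socle_basis_ext Y T0 : is_subgroup Y -> (forall y, Y y -> socle p y) ->
  (forall t, T0 t -> Y t) -> p_independent T0 ->
  exists T, [/\ forall t, T0 t -> T t, forall t, T t -> Y t, p_independent T &
    forall y, Y y -> span T y].
Proof.
move=> sY Ysoc T0Y T0ind.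
have [T [[TY Tind] T0T Tmax]] := zorn_above
  (chain_closedI (subset_chain_closed Y) p_independent_chain_closed) (conj T0Y T0ind).
exists T; split => // y Yy; apply: contrapT => y_span.
have Tyind := p_independent_add (fun t Tt => Ysoc t (TY t Tt)) (Ysoc y Yy) Tind y_span.
apply/y_span/span_mem; apply: (Tmax (fun g => T g \/ g = y)) => [|t Tt|]; last by right.
  by split => // t [/TY|->].
by left.
Qed.

Lemma exists_socle_basis_pmul k : exists T1 T,
  [/\ forall t, T1 t -> T t /\ pmul p k t, p_independent T, forall t, T t -> socle p t,
    forall s, socle p s -> span T s & forall s, socle p s -> pmul p k s -> span T1 s].
Proof.
pose Y1 (g : G) := socle p g /\ pmul p k g.
have sY1 : is_subgroup Y1 := subgroupI (socle_subgroup p G) (pmul_subgroup p G k).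
have [T1 [_ T1Y1 T1ind T1span]] :=
  socle_basis_ext sY1 (fun _ => @proj1 _ _) (fun _ => False_ind _) p_independent0.
have [T [T1T Tsoc Tind Tspan]] := socle_basis_ext (socle_subgroup p G)
  (fun _ => id) (fun t T1t => proj1 (T1Y1 t T1t)) T1ind.
exists T1, T; split => // [t T1t|s s_soc s_pmul]; last exact: T1span.
by split; [apply: T1T | case: (T1Y1 t T1t)].
Qed.

End SocleBases.

Section CyclicFamilies.
Variables (p : nat) (G : zmodType) (K : Type) (x : K -> G) (h : K -> nat).
Hypothesis p_pr : prime p.

Lemma combination_of_socle_combinations N :
  (forall g : G, g *+ p ^ N = 0) ->
  (forall m s, socle p s -> pmul p m s ->
     combination (fun i : {i : K | (m <= h i)%N} => x (sval i) *+ p ^ h (sval i)) s) ->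
  forall g, combination x g.
Proof.
move=> bound socle_comb g.
suff gen : forall m g, g *+ p ^ m = 0 -> combination x g by apply: gen (bound g).
elim=> [|m IHm] {}g gm.
  by rewrite expn0 mulr1n in gm; rewrite gm; apply: combination0.
have [n [f [c def_s]]] : combination
    (fun i : {i : K | (m <= h i)%N} => x (sval i) *+ p ^ h (sval i)) (g *+ p ^ m).
  by apply: socle_comb; [rewrite /socle -mulrnA -expnSr | exists g].
pose g0 := \sum_(i < n) x (sval (f i)) *+ (c i * p ^ (h (sval (f i)) - m)).
have g0m : g0 *+ p ^ m = g *+ p ^ m.
  rewrite def_s /g0 -sumrMnl; apply: eq_bigr => i _.
  by rewrite -mulrnA -mulnA -expnD subnK ?(svalP (f i)) // mulnC mulrnA.
rewrite -(subrK g0 g); apply: combinationD.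
  by apply: IHm; rewrite mulrnBl g0m subrr.
by exists n, (fun i => sval (f i)), (fun i => c i * p ^ (h (sval (f i)) - m))%N.
Qed.

Hypothesis x_order : forall i, has_order (x i) (p ^ (h i).+1).

Lemma independent_of_socle_independent N :
  (forall g : G, g *+ p ^ N = 0) ->
  (forall m (f : 'I_m -> K) c, injective f ->
     \sum_(i < m) x (f i) *+ p ^ h (f i) *+ c i = 0 -> forall i, (p %| c i)%N) ->
  forall m (f : 'I_m -> K) c, injective f ->
    \sum_(i < m) x (f i) *+ c i = 0 -> forall i, x (f i) *+ c i = 0.
Proof.
move=> bound tau_indep m f c f_inj.
suff: forall e c, (forall i, x (f i) *+ c i *+ p ^ e = 0) ->
    \sum_(i < m) x (f i) *+ c i = 0 -> forall i, x (f i) *+ c i = 0.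
  by move/(_ N c (fun i => bound _)).
elim=> [|e IHe] {}c ce sum0; first by move=> i; rewrite -[LHS]mulr1n -(expn0 p) ce.
suff ce' : forall i, x (f i) *+ c i *+ p ^ e = 0 by apply: IHe ce' sum0.
have /choice[d def_d] : forall j, exists q,
    x (f j) *+ (c j * p ^ e) = x (f j) *+ p ^ h (f j) *+ q.
  move=> j; apply: (socle_multiple_pexp p_pr (x_order (f j))).
  by rewrite /socle -mulrnA -mulnA -expnSr mulrnA ce.
have p_d : forall j, (p %| d j)%N.
  apply: tau_indep f_inj _.
  under eq_bigr do rewrite -def_d mulrnA.
  by rewrite sumrMnl sum0 mul0rn.
move=> i; rewrite -mulrnA def_d; apply: mulrn_dvdn_eq0 (p_d i).
by rewrite -mulrnA -expnSr; case: (x_order (f i)).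
Qed.

End CyclicFamilies.

Lemma ulm_supported_of_sum_of_cyclics p k (G : zmodType) :
  prime p -> sum_of_cyclics_n_n1 p k.+1 G -> ulm_supported p k G.
Proof.
move=> p_pr [I [J [a [b [a_order [b_order [gen indep]]]]]]].
pose x κ := match κ with inl i => a i | inr j => b j end.
have x_bound κ : x κ *+ p ^ k.+2 = 0.
  case: κ => [i|j] /=; last by case: (b_order j).
  by rewrite expnS mulnC mulrnA; case: (a_order i) => -> _; rewrite mul0rn.
have x_pmul κ c : socle p (x κ *+ c) -> pmul p k (x κ *+ c).
  case: κ => [i|j] /=.
    case/(socle_multiple_pexp p_pr (a_order i)) => q ->.
    by exists (a i *+ q); rewrite -!mulrnA mulnC.
  case/(socle_multiple_pexp p_pr (b_order j)) => q ->.
  by exists (b j *+ p *+ q); rewrite -!mulrnA mulnCA -expnS mulnC.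
split=> [g|s s_soc].
  have [m [f [c ->]]] := gen g; rewrite -sumrMnl big1 // => i _.
  by rewrite -mulrnA mulnC mulrnA x_bound mul0rn.
have [m [f [c def_s]]] := gen s.
have [m' [f' [c' [f'_inj def_s']]]] := combination_injective x f c.
rewrite def_s def_s' in s_soc *; apply: subg_sum (pmul_subgroup p G k) _ => i.
apply: x_pmul; rewrite /socle -mulrnA.
apply: (indep m' f' (fun i => c' i * p)%N f'_inj).
by rewrite -[RHS]s_soc -sumrMnl; apply: eq_bigr => j _; rewrite mulrnA.
Qed.

Lemma sum_of_cyclics_of_ulm_supported p k (G : zmodType) :
  prime p -> ulm_supported p k G -> sum_of_cyclics_n_n1 p k.+1 G.
Proof.
move=> p_pr [bound socle_pmul].
have [T1 [T [T1T Tind Tsoc Tspan T1span]]] := exists_socle_basis_pmul G p_pr k.+1.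
pose I := {t : G | T t /\ ~ T1 t}.
pose J := {t : G | T1 t}.
have /choice[a def_a] : forall i : I, exists u, u *+ p ^ k = sval i.
  by move=> [t [Tt _]] /=; have [u ->] := socle_pmul t (Tsoc t Tt); exists u.
have /choice[b def_b] : forall j : J, exists u, u *+ p ^ k.+1 = sval j.
  by move=> [t T1t] /=; have [_ [u ->]] := T1T t T1t; exists u.
pose x κ := match κ with inl i => a i | inr j => b j end.
pose h (κ : I + J) := match κ with inl _ => k | inr _ => k.+1 end.
pose tau (κ : I + J) := match κ with inl i => sval i | inr j => sval j end.
have x_tau κ : x κ *+ p ^ h κ = tau κ by case: κ.
have tauT κ : T (tau κ) by case: κ => [[t [Tt _]]|[t T1t]] //; case: (T1T t T1t).
have tau_inj : injective tau.
  case=> [[t1 P1]|[t1 P1]] [[t2 P2]|[t2 P2]] /= t12; subst t2.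
  - by rewrite (Prop_irrelevance P1 P2).
  - by case: (proj2 P1).
  - by case: (proj2 P2).
  - by rewrite (Prop_irrelevance P1 P2).
have x_order κ : has_order (x κ) (p ^ (h κ).+1).
  apply: (has_order_pexp p_pr); last by rewrite x_tau; apply: p_independent_neq0 Tind _.
  by rewrite expnSr mulrnA x_tau; apply: Tsoc.
exists I, J, a, b; split; first exact: (fun i => x_order (inl i)).
split; first exact: (fun j => x_order (inr j)).
split.
  apply: (combination_of_socle_combinations (x := x) (h := h) bound) => m s s_soc s_pmul.
  case: (ltngtP m k.+1) s_pmul => [m_le|m_gt|->] s_pmul.
  - apply: combination_sub (Tspan s s_soc) _ => -[t Tt] /=.
    have [T1t|nT1t] := pselect (T1 t).
      by exists (exist _ (inr (exist _ t T1t)) (ltnW m_le)); rewrite x_tau.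
    by exists (exist _ (inl (exist _ t (conj Tt nT1t))) m_le); rewrite x_tau.
  - case: s_pmul => t ->; rewrite (mulrn_dvdn_eq0 (bound t)) ?dvdn_exp2l //.
    exact: combination0.
  - apply: combination_sub (T1span s s_soc s_pmul) _ => -[t T1t] /=.
    by exists (exist _ (inr (exist _ t T1t)) (leqnn _)); rewrite x_tau.
apply: (independent_of_socle_independent p_pr x_order bound) => m f c f_inj.
under eq_bigr do rewrite x_tau.
by apply: Tind => [i j /tau_inj/f_inj|i].
Qed.

Section MaximalSocle.
Variables (p N : nat) (G : zmodType).
Hypotheses (p_pr : prime p) (bound : forall g : G, g *+ p ^ N = 0).
Implicit Types (K M X Y Z : G -> Prop) (g x y : G).

Definition socle_in M X := forall g, M g -> socle p g -> X g.

Definition socle_maximal X M := [/\ is_subgroup M, socle_in M X &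
  forall y, socle_in (sumg M (multiples y)) X -> M y].

Lemma exists_socle_maximal K X : is_subgroup K -> socle_in K X ->
  exists M, socle_maximal X M /\ forall g, K g -> M g.
Proof.
move=> sK KX.
have [M [[sM [KM MX]] _ Mmax]] := zorn_above (chain_closedI subgroup_chain_closed
  (chain_closedI (superset_chain_closed K) (subset_chain_closed (fun g => socle p g -> X g))))
  (conj sK (conj (fun _ => id) KX)).
exists M; split => //; split => // y MyX.
have sy := multiples_subgroup (pexp_gt0 p_pr N) (bound y).
have MMy g : M g -> sumg M (multiples y) g by apply: sumgl sy.
apply: (Mmax _ (conj (sumg_subgroup sM sy) (conj (fun g Kg => MMy g (KM g Kg)) MyX)) MMy).
exact: sumgr sM (multiples_id y).
Qed.

Lemma socle_in_essential H A : is_subgroup H -> is_subgroup A ->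
  (forall g, H g -> A g) -> socle_in A H -> essential_in H A.
Proof.
move=> sH sA HA AH; do 3!split => //.
move=> S sS SA [s [Ss s_neq0]].
have [j [sj_neq0 sj_soc]] := exists_socle_multiple (bound s) s_neq0.
have Ssj : S (s *+ p ^ j) by apply: subgMn.
by exists (s *+ p ^ j); split => //; split => //; apply: AH => //; apply: SA.
Qed.

Lemma socle_maximal_ge X M : socle_maximal X M -> is_subgroup X ->
  (forall x, X x -> socle p x) -> forall x, X x -> M x.
Proof.
move=> [sM MX Mmax] sX Xsoc x Xx; apply: Mmax => _ [m [_ [Mm [c ->] ->]]] g_soc.
have m_soc : socle p m.
  by move: g_soc; rewrite /socle mulrnDl -mulrnA mulnC mulrnA (Xsoc x Xx) mul0rn addr0.
exact: subgD sX (MX m Mm m_soc) (subgMn c sX Xx).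
Qed.

Lemma socle_maximal_step X M y : socle_maximal X M -> M (y *+ p) ->
  exists2 a, M a & socle p (y - a).
Proof.
move=> [sM MX Mmax] My; have [/Mmax My'|] := pselect (socle_in (sumg M (multiples y)) X).
  by exists y => //; rewrite subrr /socle mul0rn.
move/existsNP => [_ /not_implyP[[m [_ [Mm [c ->] ->]]] /not_implyP[g_soc g_notX]]].
have p_c : ~~ (p %| c)%N.
  apply/negP => /dvdnP[q def_c]; apply/g_notX/MX => //; apply: (subgD sM Mm).
  by rewrite def_c mulnC mulrnA; apply: subgMn q sM My.
have [d def_d] := coprime_mulrn_inv G p_pr N p_c.
exists (- (m *+ d)); first exact: subgN sM (subgMn d sM Mm).
have -> : y - - (m *+ d) = (m + y *+ c) *+ d.
  by rewrite opprK mulrnDl -mulrnA def_d // addrC.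
by rewrite /socle -mulrnA mulnC mulrnA g_soc mul0rn.
Qed.

Lemma socle_complement X Y Z0 : is_subgroup X -> is_subgroup Y ->
  (forall y, Y y -> socle p y) -> is_subgroup Z0 ->
  (forall z, Z0 z -> Y z /\ (X z -> z = 0)) ->
  exists Z, [/\ is_subgroup Z, forall z, Z0 z -> Z z,
    forall z, Z z -> Y z /\ (X z -> z = 0) & forall y, Y y -> sumg X Z y].
Proof.
move=> sX sY Ysoc sZ0 Z0YX.
have [Z [[sZ ZYX] Z0Z Zmax]] := zorn_above (chain_closedI subgroup_chain_closed
  (subset_chain_closed (fun z => Y z /\ (X z -> z = 0)))) (conj sZ0 Z0YX).
exists Z; split => // y Yy; apply: contrapT => y_notXZ.
have sy := multiples_subgroup (prime_gt0 p_pr) (Ysoc y Yy).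
have ZZy z : Z z -> sumg Z (multiples y) z by apply: sumgl sy.
suff Zy : Z y by apply: y_notXZ; apply: sumgr.
apply: (Zmax _ (conj (sumg_subgroup sZ sy) _) ZZy); last exact: sumgr sZ (multiples_id y).
move=> _ [z [_ [Zz [c ->] ->]]]; have [Yz Xz] := ZYX z Zz.
split=> [|X_zyc]; first exact: subgD sY Yz (subgMn c sY Yy).
have [p_c|p_c] := boolP (p %| c)%N.
  by rewrite (mulrn_dvdn_eq0 (Ysoc y Yy) p_c) addr0 in X_zyc *; apply: Xz.
(* otherwise [y] is a multiple of [z + y *+ c] modulo [Z] *)
have [d def_d] := coprime_mulrn_inv G p_pr 1 p_c.
case: y_notXZ; exists ((z + y *+ c) *+ d), (- (z *+ d)); split.
- exact: subgMn d sX X_zyc.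
- exact: subgN sZ (subgMn d sZ Zz).
- by rewrite mulrnDl -mulrnA def_d ?expn1 ?Ysoc // addrC addKr.
Qed.

End MaximalSocle.

Section UlmSummands.
Variables (p k : nat) (G : zmodType).
Hypotheses (p_pr : prime p) (G_ulm : ulm_supported p k G).
Implicit Types (V W A B H M X : G -> Prop) (g : G).

Let bound : forall g : G, g *+ p ^ k.+2 = 0 := proj1 G_ulm.
Let socle_pmul : forall s : G, socle p s -> pmul p k s := proj2 G_ulm.

(* Descending induction on the exponent at which a preimage of [v] under [p ^ e] lands
   in [M]: [socle_maximal_step] and [G[p] <= p ^ k G] correct the preimage by an
   element killed by [p ^ e]. *)
Lemma socle_maximal_pmul X M e v : socle_maximal p X M -> (e <= k.+1)%N ->
  M v -> pmul p e v -> exists2 a, M a & v = a *+ p ^ e.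
Proof.
move=> M_max e_le Mv [x def_v].
suff /(_ e (leqnn e))[y [def_v' My]] : forall j, (j <= e)%N ->
    exists y, y *+ p ^ e = v /\ M (y *+ p ^ (e - j)).
  by exists y; [rewrite subnn expn0 mulr1n in My | rewrite def_v'].
elim=> [|j IHj] j_lt; first by exists x; rewrite subn0 -def_v.
have [y [def_v' My]] := IHj (ltnW j_lt).
have def_e : (e - j = (e - j.+1).+1)%N by rewrite subnSK.
have def_ei : (e = (e - j.+1) + j.+1)%N by rewrite subnK.
set i := (e - j.+1)%N in def_e def_ei *.
have i_le : (i <= k)%N by rewrite /i leq_subLR (leq_trans e_le) // addSnnS leq_addl.
have Myi : M (y *+ p ^ i *+ p) by rewrite -mulrnA -expnSr -def_e.
have [a Ma a_soc] := socle_maximal_step p_pr bound M_max Myi.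
have [t def_s] := pmulW i_le (socle_pmul a_soc).
exists (y - t); split; last by rewrite mulrnBl -def_s opprB addrC subrK.
by rewrite mulrnBl def_v' def_ei expnD mulrnA -def_s expnS mulrnA a_soc mul0rn subr0.
Qed.

Definition height_split V W := forall m s, (m <= k.+1)%N -> socle p s -> pmul p m s ->
  exists v w, [/\ V v /\ pmul p m v, W w /\ pmul p m w & s = v + w].

Lemma exists_height_split V : is_subgroup V -> (forall g, V g -> socle p g) ->
  exists W, [/\ is_subgroup W, forall g, W g -> socle p g,
    forall g, V g -> W g -> g = 0 & height_split V W].
Proof.
move=> sV Vsoc; pose Y1 g := socle p g /\ pmul p k.+1 g.
have sY1 : is_subgroup Y1 := subgroupI (socle_subgroup p G) (pmul_subgroup p G k.+1).
have Y1_0 z : z = 0 -> Y1 z /\ (V z -> z = 0) by move=> ->; split => //; apply: subg0.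
have [W1 [sW1 _ W1Y1V Y1VW1]] :=
  socle_complement p_pr sV sY1 (fun _ => @proj1 _ _) (subgroup0 G) Y1_0.
have W1socV z : W1 z -> socle p z /\ (V z -> z = 0) by case/W1Y1V => -[].
(* [W] extends a complement [W1] of [V] in [Y1] to a complement of [V] in [G[p]] *)
have [W [sW W1W WsocV socVW]] :=
  socle_complement p_pr sV (socle_subgroup p G) (fun _ => id) sW1 W1socV.
exists W; split => // [g /WsocV[] // | g Vg Wg | m s m_le s_soc].
  exact: (proj2 (WsocV g Wg)) Vg.
have [m_lt|m_eq] : (m <= k)%N \/ m = k.+1.
  by move: m_le; rewrite leq_eqVlt ltnS => /orP[/eqP|]; [right|left].
- move=> _; have [v [w [Vv Ww def_s]]] := socVW s s_soc.
  have w_soc := proj1 (WsocV w Ww).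
  exists v, w; split => //; split => //.
    exact: pmulW m_lt (socle_pmul (Vsoc v Vv)).
  exact: pmulW m_lt (socle_pmul w_soc).
- rewrite m_eq => s_pmul; have [v [w [Vv W1w def_s]]] := Y1VW1 s (conj s_soc s_pmul).
  have [[_ w_pmul] _] := W1Y1V w W1w.
  exists v, w; split => //; last by split => //; apply: W1W.
  split => //; rewrite (_ : v = s - w); last by rewrite def_s addrK.
  exact: subgB (pmul_subgroup p G k.+1) s_pmul w_pmul.
Qed.

Lemma socle_maximal_direct_sum V W A B :
  is_subgroup V -> is_subgroup W -> (forall g, V g -> socle p g) ->
  (forall g, W g -> socle p g) -> (forall g, V g -> W g -> g = 0) -> height_split V W ->
  socle_maximal p V A -> socle_maximal p W B -> direct_summand A.
Proof.
move=> sV sW Vsoc Wsoc VW VW_split A_max B_max.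
have VA := socle_maximal_ge A_max sV Vsoc; have WB := socle_maximal_ge B_max sW Wsoc.
have [[sA AV _] [sB BW _]] := (A_max, B_max).
have AB g : A g -> B g -> g = 0.
  move=> Ag Bg; apply: contrapT => g_neq0.
  have [j [gj_neq0 gj_soc]] := exists_socle_multiple (bound g) g_neq0.
  by apply/gj_neq0/VW; [apply: AV gj_soc | apply: BW gj_soc]; apply: subgMn.
split=> //; exists B; split=> //; split=> // g.
suff gen : forall m g, g *+ p ^ m = 0 -> exists a b, A a /\ B b /\ g = a + b.
  exact: gen (bound g).
elim=> [|m IHm] {}g gm.
  rewrite expn0 mulr1n in gm; exists 0, 0; rewrite gm addr0.
  by split; [apply: subg0 | split; [apply: subg0|]].
have [m_gt|m_le] := ltnP k.+1 m.
  by apply: IHm; apply: mulrn_dvdn_eq0 (bound g) (dvdn_exp2l p m_gt).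
have gm_soc : socle p (g *+ p ^ m) by rewrite /socle -mulrnA -expnSr.
have gm_pmul : pmul p m (g *+ p ^ m) by exists g.
have [v [w [[Vv v_pmul] [Ww w_pmul] def_s]]] := VW_split m _ m_le gm_soc gm_pmul.
have [a0 Aa0 def_v] := socle_maximal_pmul A_max m_le (VA v Vv) v_pmul.
have [b0 Bb0 def_w] := socle_maximal_pmul B_max m_le (WB w Ww) w_pmul.
have [a [b [Aa [Bb def_g]]]] : exists a b, A a /\ B b /\ g - (a0 + b0) = a + b.
  by apply: IHm; rewrite mulrnBl mulrnDl -def_v -def_w -def_s subrr.
exists (a0 + a), (b0 + b); split; first exact: subgD.
split; first exact: subgD.
by rewrite addrACA -def_g addrC subrK.
Qed.

Lemma every_sub_essential_of_ulm_supported : every_sub_essential_in_summand G.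
Proof.
move=> H sH; pose V g := H g /\ socle p g.
have sV : is_subgroup V := subgroupI sH (socle_subgroup p G).
have Vsoc g : V g -> socle p g by case.
have [W [sW Wsoc VW VW_split]] := exists_height_split sV Vsoc.
have HV : socle_in p H V by move=> g Hg g_soc; split.
have [A [A_max HA]] := exists_socle_maximal p_pr bound sH HV.
have W0 : socle_in p (fun g => g = 0) W by move=> _ -> _; apply: subg0.
have [B [B_max _]] := exists_socle_maximal p_pr bound (subgroup0 G) W0.
exists A; split; first exact: socle_maximal_direct_sum sV sW Vsoc Wsoc VW VW_split A_max B_max.
have [sA AV _] := A_max.
by apply: (socle_in_essential bound sH sA HA) => g Ag /(AV g Ag)[].
Qed.

End UlmSummands.

Section Converse.
Variables (p : nat) (G : zmodType).
Hypotheses (p_pr : prime p) (pG : is_p_group p G).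
Implicit Types (g s x y z : G) (A : G -> Prop).

Lemma p_divisible_of_socle_pmul : (forall j s, socle p s -> pmul p j s) ->
  forall g, exists t, g = t *+ p.
Proof.
move=> soc_pmul g; have [N gN] := pG g; elim: N g gN => [|m IHm] g gm.
  by exists 0; rewrite mul0rn; rewrite expn0 mulr1n in gm.
have gm_soc : socle p (g *+ p ^ m) by rewrite /socle -mulrnA -expnSr.
have [w def_s] := soc_pmul m.+1 _ gm_soc.
have [t def_t] : exists t, g - w *+ p = t *+ p.
  by apply: IHm; rewrite mulrnBl def_s -mulrnA -expnS subrr.
by exists (t + w); rewrite mulrnDl -def_t subrK.
Qed.

Lemma pmul_of_p_divisible : (forall g, exists t, g = t *+ p) -> forall k g, pmul p k g.
Proof.
move=> p_div; elim=> [|k IHk] g; first by exists g; rewrite expn0 mulr1n.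
have [t ->] := IHk g; have [u ->] := p_div t.
by exists u; rewrite -mulrnA -expnS.
Qed.

Lemma divisible_of_pmul : (forall k g, pmul p k g) -> divisible_sub (fun _ : G => True).
Proof.
move=> all_pmul x _ m m_gt0.
have [u u_coprime def_m] := pfactor_coprime p_pr m_gt0.
have [w def_x] := all_pmul (logn p m) x.
have [N wN] := pG w.
have p_u : ~~ (p %| u)%N by rewrite -prime_coprime.
have [d def_d] := coprime_mulrn_inv G p_pr N p_u.
exists (w *+ d); split => //.
by rewrite def_m def_x -mulrnA mulnA (mulnC d) mulrnA def_d.
Qed.

Lemma socle_pmul_trivial : reduced G -> (forall j s, socle p s -> pmul p j s) ->
  forall g, g = 0.
Proof.
move=> G_red soc_pmul g; have sT : is_subgroup (fun _ : G => True) by split.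
have G_div := divisible_of_pmul (pmul_of_p_divisible (p_divisible_of_socle_pmul soc_pmul)).
exact: G_red _ sT G_div g I.
Qed.

Lemma essential_multiples_socle x A N a : has_order x (p ^ N.+1) ->
  essential_in (multiples x) A -> A a -> socle p a -> exists q, a = x *+ p ^ N *+ q.
Proof.
move=> x_order [_ [sA [_ ess]]] Aa a_soc.
have [->|a_neq0] := pselect (a = 0); first by exists 0%N; rewrite mulr0n.
have [w [[c def_w] [[c' def_w'] w_neq0]]] := ess (multiples a)
  (multiples_subgroup (prime_gt0 p_pr) a_soc) (multiples_sub sA Aa)
  (ex_intro _ a (conj (multiples_id a) a_neq0)).
have p_c : ~~ (p %| c)%N.
  by apply/negP => /(mulrn_dvdn_eq0 a_soc) ac0; apply: w_neq0; rewrite def_w ac0.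
have [d def_d] := coprime_mulrn_inv G p_pr 1 p_c.
have def_a : a = x *+ (c' * d) by rewrite mulrnA -def_w' def_w -mulrnA def_d ?expn1.
by rewrite def_a; apply: (socle_multiple_pexp p_pr x_order); rewrite -def_a.
Qed.

Hypothesis G_ess : every_sub_essential_in_summand G.

(* [x := y + z *+ p] has order [p ^ j.+2] and [x *+ p ^ j.+1 = z *+ p ^ j.+2]. If [<x>]
   is essential in the summand [A] of [G = A (+) B], then [A[p] <= <x *+ p ^ j.+1>] lies
   in [p ^ j.+1 G]; comparing the components of [y] and [z] puts [y *+ p ^ j] there too. *)
Lemma socle_pmulS j y z : socle p (y *+ p ^ j) -> socle p (z *+ p ^ j.+2) ->
  z *+ p ^ j.+2 <> 0 -> pmul p j.+1 (y *+ p ^ j).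
Proof.
move=> y_soc z_soc z_neq0; pose x := y + z *+ p.
have xs : x *+ p ^ j.+1 = z *+ p ^ j.+2.
  by rewrite mulrnDl expnSr mulrnA y_soc add0r -mulrnA -expnSr -expnS.
have x_order : has_order x (p ^ j.+2).
  by apply: (has_order_pexp p_pr); rewrite ?xs // expnSr mulrnA xs.
have [A [[sA [B [sB [AB decomp]]]] A_ess]] :=
  G_ess (multiples_subgroup (pexp_gt0 p_pr j.+2) (proj1 x_order)).
have Ax : A x by case: A_ess => _ [_ [HA _]]; apply/HA/multiples_id.
have [ya [yb [Aya [Byb def_y]]]] := decomp y.
have [za [zb [Aza [Bzb def_z]]]] := decomp z.
have def_yb : yb = - (zb *+ p).
  apply/eqP; rewrite -addr_eq0; apply/eqP/AB; last exact: subgD sB Byb (subgMn p sB Bzb).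
  have -> : yb + zb *+ p = x - (ya + za *+ p).
    by rewrite /x def_y def_z mulrnDl addrACA [RHS]addrC addKr.
  exact: subgB sA Ax (subgD sA Aya (subgMn p sA Aza)).
have def_ya : ya *+ p ^ j.+1 = zb *+ p ^ j.+2.
  have : y *+ p ^ j.+1 = 0 by rewrite expnSr mulrnA.
  rewrite def_y def_yb mulrnDl mulNrn -mulrnA -expnS => /eqP.
  by rewrite subr_eq0 => /eqP.
have ya_soc : socle p (ya *+ p ^ j).
  rewrite /socle -mulrnA -expnSr; apply: AB; first exact: subgMn _ sA Aya.
  by rewrite def_ya; apply: subgMn _ sB Bzb.
have [q def_q] := essential_multiples_socle x_order A_ess (subgMn _ sA Aya) ya_soc.
exists (x *+ q - zb).
by rewrite def_y mulrnDl def_q def_yb mulNrn mulrnBl -!mulrnA -expnS mulnC.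
Qed.

Lemma ulm_supported_of_every_sub_essential : reduced G -> exists k, ulm_supported p k G.
Proof.
move=> G_red; have [all_pmul|] := pselect (forall j s, socle p s -> pmul p j s).
  have G0 := socle_pmul_trivial G_red all_pmul.
  by exists 0%N; split => [g|s _]; [rewrite (G0 g) mul0rn | exists 0; rewrite (G0 s) mul0rn].
move=> /existsNP[j0 /existsNP[s0 /not_implyP[s0_soc s0_npmul]]].
pose P j := `[< exists2 s : G, socle p s & ~ pmul p j s >].
have exP : exists j, P j by exists j0; apply/asboolP; exists s0.
have [[|k] /asboolP[s s_soc s_npmul] k_min] := ex_minnP exP.
  by case: s_npmul; exists s; rewrite expn0 mulr1n.
have socle_pmul s' : socle p s' -> pmul p k s'.
  move=> s'_soc; apply: contrapT => s'_npmul.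
  have /k_min : P k by apply/asboolP; exists s'.
  by rewrite ltnn.
exists k; split => // g; apply: contrapT => gk_neq0.
have [N gN] := pG g.
have gkN : g *+ p ^ k.+2 *+ p ^ N = 0 by rewrite -mulrnA mulnC mulrnA gN mul0rn.
have [i [gki_neq0 gki_soc]] := exists_socle_multiple gkN gk_neq0.
have def_z : g *+ p ^ i *+ p ^ k.+2 = g *+ p ^ k.+2 *+ p ^ i by rewrite -!mulrnA mulnC.
have [t def_s] := socle_pmul s s_soc.
apply: s_npmul; rewrite def_s.
by apply: (socle_pmulS (z := g *+ p ^ i)); rewrite ?def_z -?def_s.
Qed.

End Converse.

Theorem theorem2p9 (p : nat) (G : zmodType) :
  prime p -> is_p_group p G -> reduced G ->
  (every_sub_essential_in_summand G <->
     exists n : nat, (0 < n)%N /\ sum_of_cyclics_n_n1 p n G) /\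
  ((exists n : nat, (0 < n)%N /\ sum_of_cyclics_n_n1 p n G) ->
     semi_generalized_Bassian G).
Proof.
move=> p_pr pG G_red.
have sum_ess : (exists n, (0 < n)%N /\ sum_of_cyclics_n_n1 p n G) ->
    every_sub_essential_in_summand G.
  case=> -[|k] [//= _ G_sum].
  exact: every_sub_essential_of_ulm_supported p_pr (ulm_supported_of_sum_of_cyclics p_pr G_sum).
split; first split => // G_ess.
  have [k G_ulm] := ulm_supported_of_every_sub_essential p_pr pG G_ess G_red.
  by exists k.+1; split => //; apply: sum_of_cyclics_of_ulm_supported.
by move=> /sum_ess G_ess H sH _; apply: G_ess.
Qed.
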